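(* Let $S$ be a set with at least two elements and let $T=(-\times S)^S$ be the global state monad, applied pointwise as an indexed monad on $\mathrm{Fam}(\mathbf{Set})$, with unit $\eta_A(a)=(s\mapsto(a,s))$. Take $\Gamma=1$, $A=1$, and the family $B$ over $\Gamma.TA\cong (1\times S)^S$ given by $B(g)=1$ if $g=(s\mapsto( *,s))$ and $B(g)=\emptyset$ otherwise. Then $\prod_{a\in A}(B(\eta_A(a))\times S)^S$ is nonempty while $\prod_{g\in(A\times S)^S}(B(g)\times S)^S$ is empty. Consequently there is no map $\mathrm{Fam}(\mathbf{Set})(\Gamma.A)(1,TB\{\mathbf{p}_\Gamma(\eta_A)\})\to\mathrm{Fam}(\mathbf{Set})(\Gamma.TA)(1,TB)$, so the Eilenberg–Moore dCBPV$^-$ model of $T$ on $\mathrm{Fam}(\mathbf{Set})$ admits no dependent Kleisli extensions.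
   Context: $\mathrm{Fam}(\mathbf{Set}):\mathbf{Set}^{op}\to\mathbf{Cat}$ sends a set $X$ to the category of $X$-indexed families of sets with families of functions as morphisms, reindexing by precomposition. Comprehension: $X.A=\{(x,a)\mid x\in X,a\in A(x)\}$; global elements $1\to A$ over $X$ are dependent functions $\prod_{x\in X}A(x)$. For $g:A\to A'$ over $\Gamma$, $\mathbf{p}_\Gamma(g)$ is $(c,a)\mapsto(c,g_c(a))$. A pointwise monad acts by $(TA)(x)=T(A(x))$. Dependent Kleisli extensions (for empty trailing context) are maps assigning to each global section of $TB\{\mathbf{p}_\Gamma(\eta_A)\}$ over $\Gamma.A$ a global section of $TB$ over $\Gamma.TA$, for $B$ over $\Gamma.TA$, subject to unitality and composition laws. *)

Set Implicit Arguments.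

Definition Fam (X : Type) := X -> Type.

Definition compr (X : Type) (A : Fam X) : Type := {x : X & A x}.

(* global elements 1 -> A over X : dependent functions *)
Definition Gsec (X : Type) (A : Fam X) : Type := forall x : X, A x.

Definition reindex (X Y : Type) (f : Y -> X) (A : Fam X) : Fam Y :=
  fun y => A (f y).

Definition stT (S X : Type) : Type := S -> X * S.
Definition stEta (S X : Type) (x : X) : stT S X := fun s => (x, s).

Definition TFam (S X : Type) (A : Fam X) : Fam X := fun x => stT S (A x).

Definition etaFam (S X : Type) (A : Fam X) : forall x, A x -> TFam S A x :=
  fun x a => @stEta S (A x) a.

Definition pmap (X : Type) (A A' : Fam X) (g : forall x, A x -> A' x)
  : compr A -> compr A' :=
  fun p => existT _ (projT1 p) (g (projT1 p) (projT2 p)).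

Definition Gam1 : Type := unit.
Definition A1 : Fam Gam1 := fun _ => unit.

(* B over Gamma.TA : B(g) = 1 if g = (s |-> (tt,s)), empty otherwise
   (realised as the subsingleton {_ : unit | g = eta tt}). *)
Definition Bfam (S : Type) : Fam (compr (TFam S A1)) :=
  fun p => {_ : unit | projT2 p = @stEta S unit tt}.

Arguments etaFam S [X] A x _ _.
Arguments Bfam : clear implicits.
Arguments pmap [X A A'] g _.

(* Over [eta tt] the family [B] is inhabited, so the reindexed family has the
   section returning that point with the state unchanged.  A section of [T B]
   over all of [Gamma.TA] would, at the constant computation [s |-> (tt, s1)],
   yield a proof that this computation equals [eta tt]; evaluating both at
   another state [s2] gives [s1 = s2]. *)

Lemma reindex_Bfam_section (S : Type) :
  Gsec (TFam S (reindex (pmap (etaFam S A1)) (Bfam S))).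
Proof.
  intros [[] []] s.
  exact (exist _ tt eq_refl, s).
Qed.

Lemma Bfam_const_state (S : Type) (s0 : S)
    (b : Bfam S (existT _ tt (fun _ : S => (tt, s0)))) :
  forall s : S, s0 = s.
Proof.
  destruct b as [_ e]; intro s.
  exact (f_equal (fun h => snd (h s)) e).
Qed.

Lemma Bfam_no_section {S : Type} {s1 s2 : S} :
  s1 <> s2 -> ~ inhabited (Gsec (TFam S (Bfam S))).
Proof.
  intros hs [f].
  exact (hs (@Bfam_const_state S s1 (fst (f (existT _ tt (fun _ => (tt, s1))) s1)) s2)).
Qed.

Theorem mainTheorem7 (S : Type) (s1 s2 : S) (hs : s1 <> s2) :
  inhabited (Gsec (TFam S (reindex (pmap (etaFam S A1)) (Bfam S))))
  /\ ~ inhabited (Gsec (TFam S (Bfam S)))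
  /\ ~ inhabited (Gsec (TFam S (reindex (pmap (etaFam S A1)) (Bfam S)))
                  -> Gsec (TFam S (Bfam S))).
Proof.
  pose proof (Bfam_no_section hs) as no_section.
  split; [exact (inhabits (reindex_Bfam_section S)) | split; [exact no_section |]].
  intros [ext].
  exact (no_section (inhabits (ext (reindex_Bfam_section S)))).
Qed.
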